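(* For each $u\in(0,1)$, $Q(u)=G(u)$ if and only if $S(u)=G(u)$.
   Context: Let $\mu,\nu$ be probability measures on $\mathbb R$ with finite first moments and $\mu\le_{cx}\nu$. Put $P_\eta(k)=\int(k-x)^+\eta(dx)$, $D=P_\nu-P_\mu$, and assume $\{k:D(k)>0\}$ is an interval. Let $G$ be any quantile function of $\mu$. For $u\in(0,1)$ let $\mu_u(A)=\mu(A\cap(-\infty,G(u)))+\big(u-\mu((-\infty,G(u)))\big)\delta_{G(u)}(A)$ and $\mathcal E_u=P_\nu-P_{\mu_u}$. $f^c$ is the largest convex minorant of $f$; $X^f(y)=\sup\{x\le y: f^c(x)=f(x)\}$, $Z^f(y)=\inf\{z\ge y: f^c(z)=f(z)\}$. Define $Q(u)=X^{\mathcal E_u}(G(u))$ and $S(u)=Z^{\mathcal E_u}(G(u))$. *)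

From HB Require Import structures.
From mathcomp Require Import all_boot all_order all_algebra.
From mathcomp Require Import all_classical all_reals all_analysis.
Set Implicit Arguments. Unset Strict Implicit. Unset Printing Implicit Defensive.
Import Order.TTheory GRing.Theory Num.Theory.
Import numFieldNormedType.Exports.
Local Open Scope classical_set_scope.
Local Open Scope ring_scope.

Section Defs.
Context {R : realType}.

Definition convex_fun (f : R -> R) : Prop :=
  forall x y t, 0 <= t <= 1 -> f (t * x + (1 - t) * y) <= t * f x + (1 - t) * f y.

Definition finite_first_moment (mu : probability R R) : Prop :=
  mu.-integrable setT (fun x => x%:E).

Definition cx_le (mu nu : probability R R) : Prop :=
  forall f : R -> R, convex_fun f ->
    (\int[mu]_x (f x)%:E <= \int[nu]_x (f x)%:E)%E.

Definition Pput (eta : probability R R) (k : R) : R :=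
  fine (\int[eta]_x (Num.max (k - x) 0)%:E).

Definition Dfun (mu nu : probability R R) (k : R) : R := Pput nu k - Pput mu k.

Definition is_quantile (mu : probability R R) (G : R -> R) : Prop :=
  forall u, 0 < u < 1 ->
    (mu `]-oo, G u[%classic <= u%:E <= mu `]-oo, G u]%classic)%E.

(* P_{mu_u}(k), where mu_u = mu|_(-oo,G u) + (u - mu((-oo,G u))) delta_{G u} *)
Definition Pput_u (mu : probability R R) (G : R -> R) (u k : R) : R :=
  fine (\int[mu]_(x in `]-oo, G u[%classic) (Num.max (k - x) 0)%:E
        + (u%:E - mu `]-oo, G u[%classic) * (Num.max (k - G u) 0)%:E)%E.

Definition Efun (mu nu : probability R R) (G : R -> R) (u : R) (k : R) : R :=
  Pput nu k - Pput_u mu G u k.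

Definition lcm (f : R -> R) (x : R) : R :=
  sup [set g x | g in [set g : R -> R | convex_fun g /\ forall y, g y <= f y]].

(* X^f(y) = sup{x <= y : f^c(x) = f(x)},  Z^f(y) = inf{z >= y : f^c(z) = f(z)}
   (in the extended reals; sup of empty = -oo, inf of empty = +oo) *)
Definition Xf (f : R -> R) (y : R) : \bar R :=
  ereal_sup [set x%:E | x in [set x | x <= y /\ lcm f x = f x]].
Definition Zf (f : R -> R) (y : R) : \bar R :=
  ereal_inf [set z%:E | z in [set z | y <= z /\ lcm f z = f z]].

Definition Qfun (mu nu : probability R R) (G : R -> R) (u : R) : \bar R :=
  Xf (Efun mu nu G u) (G u).
Definition Sfun (mu nu : probability R R) (G : R -> R) (u : R) : \bar R :=
  Zf (Efun mu nu G u) (G u).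

End Defs.

From Pilot Require Import Defs.
From HB Require Import structures.
From mathcomp Require Import all_boot all_order all_algebra.
From mathcomp Require Import all_classical all_reals all_analysis.
From mathcomp Require Import measurable_realfun ring lra.
Import Order.TTheory GRing.Theory Num.Theory.
Import numFieldNormedType.Exports.
Local Open Scope classical_set_scope.
Local Open Scope ring_scope.

(* Q(u) = G(u) and S(u) = G(u) both say that G(u) is a contact point of E_u
   with its largest convex minorant, because the contact set of a continuous
   function is closed: if a convex g lies above a continuous f at points tending
   to y along a segment, the chord bound given by convexity yields g y >= f y.
   E_u is continuous since put prices are 1-Lipschitz in the strike. *)

Lemma klipschitz_continuous (R : realFieldType) (V W : normedModType R) (k : R)
    (f : V -> W) : k.-lipschitz f -> continuous f.
Proof.
move=> fk x; apply/cvgrPdist_lt => e e0.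
have k1 : 0 < `|k| + 1 by rewrite ltr_wpDl.
apply/nbhs_normP; exists (e / (`|k| + 1)); first exact: divr_gt0.
move=> z /= xz; apply: le_lt_trans (fk (x, z) (conj I I)) _ => /=.
apply: le_lt_trans (_ : _ <= (`|k| + 1) * `|x - z|) _.
  by apply: ler_wpM2r; [exact: normr_ge0 | rewrite ler_wpDr // ler_norm].
by rewrite -ltr_pdivlMl // mulrC.
Qed.

Section ConvexMinorant.
Context {R : realType}.
Implicit Types (f g : R -> R) (y s : R).

Definition convex_minorants f :=
  [set g : R -> R | convex_fun g /\ forall x, g x <= f x].

Lemma lcm_eq0 f : convex_minorants f = set0 -> Defs.lcm f = cst 0.
Proof.
move=> f0; apply/funext => x; rewrite /Defs.lcm -/(convex_minorants f) f0.
by rewrite image_set0 sup0.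
Qed.

Lemma lcm_le f : convex_minorants f !=set0 -> forall x, Defs.lcm f x <= f x.
Proof.
move=> [g0 Mg0] x; apply: ge_sup; first by exists (g0 x), g0.
by move=> _ [g [_ gf] <-].
Qed.

Lemma lcm_convex f : convex_fun (Defs.lcm f).
Proof.
move=> x y t t01.
have [f0|/set0P[g0 Mg0]] := eqVneq (convex_minorants f) set0.
  by rewrite lcm_eq0 //= !mulr0 addr0.
have [t0 t1] : 0 <= t /\ 0 <= 1 - t by case/andP: t01 => ? ?; split; lra.
have ub z : has_ubound [set g z | g in convex_minorants f].
  by exists (f z) => _ [g [_ gf] <-].
apply: ge_sup; first by exists (g0 (t * x + (1 - t) * y)), g0.
move=> _ [g [cg gf] <-]; apply: le_trans (cg x y t t01) _.
by apply: lerD; apply: ler_wpM2l => //; apply: (ub_le_sup (ub _)); exists g.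
Qed.

Lemma le_convex_of_side_limit f g y s : convex_fun g -> {for y, continuous f} ->
  (forall e, 0 < e -> exists2 t, 0 <= t < e & f (y + t * s) <= g (y + t * s)) ->
  f y <= g y.
Proof.
move=> cg fy side; apply/ler_addgt0Pr => e e0.
have /nbhs_ballP[d /= d0 fd] : \forall x \near y, `|f y - f x| < e / 2.
  by move/cvgrPdist_lt : fy; apply; lra.
set C := `|g (y + s) - g y|.
have [s0 C0] : 0 <= `|s| /\ 0 <= C by split; exact: normr_ge0.
(* t < del ensures t <= 1, |t s| < d and t C < e / 2. *)
pose del := Num.min 1 (Num.min (d / (`|s| + 1)) (e / (2 * (C + 1)))).
have [t /andP[t0 tdel] ft] : exists2 t, 0 <= t < del & f (y + t * s) <= g (y + t * s).
  apply: side; rewrite /del !lt_min ltr01 /=.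
  by apply/andP; split; apply: divr_gt0; lra.
move: tdel; rewrite !lt_min => /and3P[t1 td te].
have fyt : f y < f (y + t * s) + e / 2.
  have : ball y d (y + t * s).
    rewrite /ball /= opprD addrA subrr sub0r normrN normrM (ger0_norm t0).
    by move: td; rewrite ltr_pdivlMr; nra.
  by move/fd; rewrite ltr_norml => /andP[_]; lra.
have gyt : g (y + t * s) <= g y + t * C.
  have := cg (y + s) y t; rewrite t0 ltW //= => /(_ isT).
  have -> : t * (y + s) + (1 - t) * y = y + t * s by ring.
  have : g (y + s) - g y <= C by exact: ler_norm.
  nra.
have tC : t * C <= e / 2.
  move: te; rewrite ltr_pdivlMr; nra.
lra.
Qed.

Lemma lcm_eq_of_side_limit f y s : {for y, continuous f} ->
  (forall e, 0 < e -> exists2 t, 0 <= t < e &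
     Defs.lcm f (y + t * s) = f (y + t * s)) ->
  Defs.lcm f y = f y.
Proof.
move=> fy side.
(* Without convex minorants, lcm f is the junk value sup set0 = 0. *)
have [f0|/set0P Mf] := eqVneq (convex_minorants f) set0.
  have c0 := lcm_convex f; rewrite lcm_eq0 // in side c0 *.
  apply/eqP; rewrite eq_le; apply/andP; split.
    rewrite -oppr_le0; apply: (le_convex_of_side_limit (fun x => - f x) _ y s c0).
      exact: continuousN.
    by move=> e /side[t t0 ft]; exists t => //=; rewrite -ft oppr0.
  apply: (le_convex_of_side_limit f _ y s c0 fy).
  by move=> e /side[t t0 ft]; exists t; rewrite // -ft.
apply/eqP; rewrite eq_le lcm_le //=.
apply: (le_convex_of_side_limit _ _ _ s (lcm_convex f) fy).
by move=> e /side[t t0 ft]; exists t; rewrite // ft.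
Qed.

Lemma Xf_eq_self f y : {for y, continuous f} ->
  Xf f y = y%:E <-> Defs.lcm f y = f y.
Proof.
move=> fy; split => [Xy|fcy].
  apply: (lcm_eq_of_side_limit _ _ (-1) fy) => e e0.
  have : ((y - e)%:E < Xf f y)%E by rewrite Xy lte_fin; lra.
  case/ereal_sup_gt => _ [x [xy fcx] <-]; rewrite lte_fin => ex.
  exists (y - x); first by apply/andP; split; lra.
  by rewrite mulrN1 opprB addrC subrK.
apply/eqP; rewrite eq_le; apply/andP; split.
  by apply: ge_ereal_sup => _ [x [xy _] <-]; rewrite lee_fin.
by apply: ereal_sup_ubound; exists y.
Qed.

Lemma Zf_eq_self f y : {for y, continuous f} ->
  Zf f y = y%:E <-> Defs.lcm f y = f y.
Proof.
move=> fy; split => [Zy|fcy].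
  apply: (lcm_eq_of_side_limit _ _ 1 fy) => e e0.
  have : (Zf f y < (y + e)%:E)%E by rewrite Zy lte_fin; lra.
  case/ereal_inf_lt => _ [x [yx fcx] <-]; rewrite lte_fin => xe.
  exists (x - y); first by apply/andP; split; lra.
  by rewrite mulr1 addrC subrK.
apply/eqP; rewrite eq_le; apply/andP; split.
  by apply: ereal_inf_lbound; exists y.
by apply: le_ereal_inf_tmp => _ [x [yx _] <-]; rewrite lee_fin.
Qed.

End ConvexMinorant.

Lemma put_payoff_dist {R : realDomainType} (x k k' : R) :
  `|Num.max (k - x) 0 - Num.max (k' - x) 0| <= `|k - k'|.
Proof.
have h1 : k - k' <= `|k - k'| := ler_norm _.
have h2 : k' - k <= `|k - k'| by rewrite distrC; exact: ler_norm.
rewrite ler_norml; case: (leP (k - x) 0) => ?; case: (leP (k' - x) 0) => ?.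
all: by apply/andP; split; lra.
Qed.

Lemma put_payoff_continuous {R : realType} (x : R) :
  continuous (fun k => Num.max (k - x) 0).
Proof.
apply: (@klipschitz_continuous _ _ _ 1) => -[k k'] _ /=.
by rewrite mul1r put_payoff_dist.
Qed.

Section PutPrice.
Context {R : realType} {mu : {finite_measure set R -> \bar R}} {D : set R}.
Hypotheses (mD : measurable D) (mu1 : mu.-integrable D EFin).

Lemma put_integrable k : mu.-integrable D (EFin \o (fun x => Num.max (k - x) 0)).
Proof.
apply: (@le_integrable _ _ _ _ _ mD _ (EFin \o (fun x => k - x))).
- apply/measurable_EFinP/measurable_funrpos.
  by apply: measurable_funB => //; exact: measurable_cst.
- move=> x _ /=; rewrite lee_fin.
  by case: (leP (k - x) 0) => _; rewrite ?normr0.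
- have -> : EFin \o (fun x => k - x) = ((EFin \o cst k) \- EFin)%E by [].
  exact/integrableB/mu1/finite_measure_integrable_cst.
Qed.

Lemma put_Rintegral_lipschitz k k' :
  `|\int[mu]_(x in D) Num.max (k - x) 0 - \int[mu]_(x in D) Num.max (k' - x) 0|
    <= `|k - k'| * fine (mu D).
Proof.
have iB : mu.-integrable D
    (EFin \o (fun x => Num.max (k - x) 0 - Num.max (k' - x) 0)).
  exact: (integrableB _ (put_integrable k) (put_integrable k')).
rewrite -(RintegralB mD (put_integrable k) (put_integrable k')) -Rintegral_cst //.
apply: le_trans (le_normr_Rintegral mD iB) _.
apply: le_Rintegral => //; first exact: integrable_norm.
  exact: finite_measure_integrable_cst.
by move=> x _; exact: put_payoff_dist.
Qed.

Lemma put_Rintegral_continuous :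
  continuous (fun k => \int[mu]_(x in D) Num.max (k - x) 0).
Proof.
apply: (@klipschitz_continuous _ _ _ (fine (mu D))) => -[k k'] _ /=.
by rewrite mulrC; exact: put_Rintegral_lipschitz.
Qed.

End PutPrice.

Section Efun.
Context {R : realType} {mu nu : probability R R} (G : R -> R) (u : R).
Hypotheses (mu1 : finite_first_moment mu) (nu1 : finite_first_moment nu).

Lemma Pput_continuous : continuous (Pput nu).
Proof. exact: (put_Rintegral_continuous measurableT nu1). Qed.

Lemma Pput_u_continuous : continuous (Pput_u mu G u).
Proof.
set D := `]-oo, G u[%classic.
have mD : measurable D by exact: measurable_itv.
have muD : mu.-integrable D EFin := integrableS measurableT mD (subsetT D) mu1.
have -> : Pput_u mu G u = (fun k => \int[mu]_(x in D) Num.max (k - x) 0)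
    + cst (u - fine (mu D)) \* (fun k => Num.max (k - G u) 0).
  apply/funext => k /=; have /(integrable_fin_num mD) fI := put_integrable mD muD k.
  have fD : mu D \is a fin_num by rewrite fin_num_measure.
  by rewrite /Pput_u -(fineK fI) -(fineK fD) -EFinB -EFinM -EFinD.
move=> k; apply: continuousD; first exact: (put_Rintegral_continuous mD muD).
by apply: continuousM; [exact: cst_continuous | exact: put_payoff_continuous].
Qed.

Lemma Efun_continuous : continuous (Efun mu nu G u).
Proof.
by move=> k; apply: continuousB; [exact: Pput_continuous | exact: Pput_u_continuous].
Qed.

End Efun.

Theorem lemma4p1 (R : realType) (mu nu : probability R R) (G : R -> R) :
  finite_first_moment mu -> finite_first_moment nu ->
  cx_le mu nu ->
  is_interval [set k | 0 < Dfun mu nu k] ->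
  is_quantile mu G ->
  forall u : R, 0 < u < 1 ->
    (Qfun mu nu G u = (G u)%:E <-> Sfun mu nu G u = (G u)%:E).
Proof.
move=> mu1 nu1 _ _ _ u _; have cE := Efun_continuous G u mu1 nu1.
exact: iff_trans (Xf_eq_self _ _ (cE _)) (iff_sym (Zf_eq_self _ _ (cE _))).
Qed.
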